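(* Let $(s_1,l_1,\alpha_1),\ldots,(s_i,l_i,\alpha_i)$ be the first $i$ tuples of the LZ77 parse (without self-references) of a string $S$. Then $s_i$ and $l_i$ can each be written in binary with $i$ bits.
   Context: The LZ77 parse of $S$ divides $S$ greedily from left to right into phrases. The $j$-th phrase, starting at position $u_j$, is the longest substring having an occurrence starting to the left of $u_j$, followed by the next symbol. It is represented by $(s_j,l_j,\alpha_j)$, where $s_j$ is the start position of that earlier occurrence, $l_j$ its length, and $\alpha_j=S[u_j+l_j]$. We have $s_1=l_1=0$, $u_1=1$, $e_j=u_j+l_j$, and $u_j=e_{j-1}+1$. Without self-references, $s_j+l_j\le u_j$. *)

(* Strings are sequences over an eqType;
   positions are 1-indexed as in the paper: S[p] = nth _ S p.-1, and the
   substring of length l starting at position p is  take l (drop p.-1 S). *)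
From mathcomp Require Import all_boot.
Set Implicit Arguments. Unset Strict Implicit. Unset Printing Implicit Defensive.

Definition substr (T : Type) (S : seq T) (p l : nat) : seq T :=
  take l (drop p.-1 S).

(* [s, s+l-1] is an occurrence, starting at s >= 1 to the left of u and
   without self-reference (s + l <= u), of S[u .. u+l-1]. *)
Definition earlier_occ (T : eqType) (S : seq T) (u s l : nat) : Prop :=
  1 <= s /\ s + l <= u /\ substr S s l = substr S u l.

(* (s, l, a) is the LZ77 phrase (without self-references) starting at u:
   l is the largest length of a substring starting at u that has an earlier
   non-self-referencing occurrence and is followed by a symbol of S;
   s is the start of such an occurrence (s = 0, i.e. any s <= u, when l = 0);
   a = S[u + l]. *)
Definition lz77_phrase (T : eqType) (S : seq T) (u : nat) (p : nat * nat * T) : Prop :=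
  let: (s, l, a) := p in
  [/\ 1 <= u, u + l <= size S, nth a S (u + l).-1 = a,
      (if 0 < l then earlier_occ S u s l else s + l <= u)
    & forall s' l', earlier_occ S u s' l' -> u + l' <= size S -> l' <= l].

Fixpoint lz77_prefix (T : eqType) (S : seq T) (u : nat) (t : seq (nat * nat * T)) : Prop :=
  match t with
  | [::] => True
  | p :: t' => lz77_phrase S u p /\ lz77_prefix S (u + p.1.2).+1 t'
  end.

(* A phrase starting at u copies from an occurrence that ends before u, so
   s <= u and l < u; hence the next phrase starts at u + l + 1 <= 2u.  The
   i-th phrase therefore starts at u_i <= 2^(i-1), and s_i, l_i < 2^i. *)
From mathcomp Require Import all_boot.
From mathcomp Require Import zify.

Lemma lz77_phrase_bound (T : eqType) (S : seq T) (u s l : nat) (a : T) :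
  lz77_phrase S u (s, l, a) -> s <= u /\ l < u.
Proof.
case=> u_gt0 _ _ occ _.
case: (posnP l) occ => [->|_]; first by rewrite addn0; lia.
by case=> s_ge1 [sl_le _]; lia.
Qed.

Lemma lz77_phrase_next_le (T : eqType) (S : seq T) (u : nat) (p : nat * nat * T) :
  lz77_phrase S u p -> (u + p.1.2).+1 <= u.*2.
Proof. by case: p => [[s l] a] /lz77_phrase_bound [_ l_lt] /=; lia. Qed.

Lemma lz77_prefix_rcons (T : eqType) (S : seq T) (t : seq (nat * nat * T))
    (p : nat * nat * T) (u : nat) :
  lz77_prefix S u (rcons t p) ->
  exists2 v, v <= u * 2 ^ size t & lz77_phrase S v p.
Proof.
elim: t u => [|q t IH] u /=; first by case=> ph _; exists u; rewrite ?muln1.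
case=> /lz77_phrase_next_le next_le /IH [v v_le ph]; exists v => //.
apply: (leq_trans v_le).
by rewrite expnS mulnA leq_mul2r muln2 next_le orbT.
Qed.

Theorem lemma5 (T : eqType) (S : seq T) (t : seq (nat * nat * T))
  (s l : nat) (a : T) :
  lz77_prefix S 1 (rcons t (s, l, a)) ->
  s < 2 ^ (size t).+1 /\ l < 2 ^ (size t).+1.
Proof.
case/lz77_prefix_rcons=> v; rewrite mul1n => v_le /lz77_phrase_bound [s_le l_lt].
have pow_lt : 2 ^ size t < 2 ^ (size t).+1 by rewrite ltn_exp2l.
by split; lia.
Qed.
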